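(* For $0\le r_1,r_2\le n$ and $0\le s\le N(r_1,r_2)$, $$\lambda_s^{r_1,r_2}(r_2)=(-1)^s\frac{[r_1]_s}{[n-r_1]_s},\qquad \lambda_s^{r_1,r_2}(r_2-r_1)=\frac{[r_1]_s\,[n-r_2]_s}{[n-r_1]_s\,[r_2]_s}.$$
   Context: Let $\Omega$ be a finite set with $|\Omega|=n\ge1$, $G=S(\Omega)$, $X=\mathcal P(\Omega)$, $X_r=\{x\in X:|x|=r\}$, $G$ acting on $L^2(X)$ (complex functions on $X$; $L^2(X_r)$ = functions supported on $X_r$) by $(\rho(g)\psi)(x)=\psi(g^{-1}x)$. For $0\le s\le\min(r,n-r)$, $L^2(X_r)_s$ is the unique irreducible $G$-subspace of $L^2(X_r)$ isomorphic to the irreducible representation associated with the partition $(n-s,s)$. $N(r_1,r_2)=\min(r_1,n-r_1,r_2,n-r_2)$. For $0\le s\le N(r_1,r_2)$, $\Lambda_s^{r_1,r_2}$ is a $G$-equivariant map $L^2(X)\to L^2(X)$ sending $L^2(X_{r_1})_s$ into $L^2(X_{r_2})_s$ and vanishing on its orthogonal complement, with kernel $\lambda$ defined on integers $\max(0,r_2-r_1)\le k\le\min(n-r_1,r_2)$ by $(\Lambda_s^{r_1,r_2}\psi)(x_2)=\sum_{x_1\in X_{r_1}}\lambda(|x_2\setminus x_1|)\psi(x_1)$. The kernel agrees on its domain with a unique polynomial of degree $s$ which is nonzero at $0$; $\Lambda_s^{r_1,r_2}$ is normalized so that this polynomial takes the value $1$ at $t=0$, and $\lambda_s^{r_1,r_2}(t)$,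 $t\in\mathbb C$, denotes this polynomial. $[\alpha]_k=\alpha(\alpha-1)\cdots(\alpha-k+1)$. *)

From mathcomp Require Import all_boot all_order all_algebra all_fingroup.
Set Implicit Arguments. Unset Strict Implicit. Unset Printing Implicit Defensive.
Import GRing.Theory Num.Theory.
Local Open Scope ring_scope.

(* Omega = 'I_n, X = P(Omega) = {set 'I_n}, G = S(Omega) = {perm 'I_n},
   L^2(X) = complex functions on X, here {ffun {set 'I_n} -> C}
   with C any numeric closed field (e.g. the complex numbers). *)
Notation L2 C n := {ffun {set 'I_n} -> C}.

Section Defs.
Variables (C : numClosedFieldType) (n : nat).

Definition fzero : L2 C n := [ffun _ => 0].
Definition fadd (f g : L2 C n) : L2 C n := [ffun x => f x + g x].
Definition fscale (a : C) (f : L2 C n) : L2 C n := [ffun x => a * f x].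

Definition dotL2 (f g : L2 C n) : C := \sum_(x : {set 'I_n}) f x * (g x)^*.

Definition rho (g : {perm 'I_n}) (psi : L2 C n) : L2 C n :=
  [ffun x : {set 'I_n} => psi ((g^-1)%g @: x)].

Definition is_linear (f : L2 C n -> L2 C n) : Prop :=
  forall (a : C) (u v : L2 C n), f (fadd (fscale a u) v) = fadd (fscale a (f u)) (f v).

Definition G_equivariant (f : L2 C n -> L2 C n) : Prop :=
  forall (g : {perm 'I_n}) psi, f (rho g psi) = rho g (f psi).

Definition is_subspace (V : L2 C n -> Prop) : Prop :=
  [/\ V fzero, forall u v, V u -> V v -> V (fadd u v)
    & forall a u, V u -> V (fscale a u)].

Definition G_invariant (V : L2 C n -> Prop) : Prop :=
  forall g psi, V psi -> V (rho g psi).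

Definition G_subspace (V : L2 C n -> Prop) : Prop := is_subspace V /\ G_invariant V.

Definition G_irreducible (V : L2 C n -> Prop) : Prop :=
  [/\ G_subspace V, exists2 u, V u & u <> fzero
    & forall W, G_subspace W -> (forall u, W u -> V u) ->
         (forall u, W u -> u = fzero) \/ (forall u, V u -> W u)].

Definition L2r (r : nat) (psi : L2 C n) : Prop :=
  forall x : {set 'I_n}, #|x| <> r -> psi x = 0.

Definition span (P : L2 C n -> Prop) (psi : L2 C n) : Prop :=
  forall W, is_subspace W -> (forall u, P u -> W u) -> W psi.

(* Polytabloids of shape (n-s,s): a tableau with columns (a_i over b_i), i < s,
   (all 2s entries distinct) gives
   e_t = sum over the column group of sign * {sigma t}; a tabloid of shape
   (n-s,s) is identified with its second row, an s-subset of Omega. *)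
Definition polytabloid (s : nat) (a b : 'I_s -> 'I_n) : L2 C n :=
  \big[fadd/fzero]_(eps : {ffun 'I_s -> bool})
     fscale ((-1) ^+ #|[set i | eps i]|)
       [ffun x : {set 'I_n} => if x == [set (if eps i then a i else b i) | i : 'I_s] then 1 else 0].

Definition two_row_tableau (s : nat) (a b : 'I_s -> 'I_n) : Prop :=
  [/\ injective a, injective b & forall i j, a i <> b j].

(* The Specht module S^{(n-s,s)}, realized inside L^2(X_s) (= the permutation
   module M^{(n-s,s)}, with the same action rho). *)
Definition specht (s : nat) : L2 C n -> Prop :=
  span (fun u => exists a b, two_row_tableau a b /\ u = @polytabloid s a b).

Definition G_isomorphic (V W : L2 C n -> Prop) : Prop :=
  exists phi : L2 C n -> L2 C n,
    [/\ is_linear phi, G_equivariant phi,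
        forall u, V u -> W (phi u),
        forall u, V u -> phi u = fzero -> u = fzero
      & forall w, W w -> exists2 u, V u & phi u = w].

(* V is "L^2(X_r)_s": an irreducible G-subspace of L^2(X_r) isomorphic to the
   irreducible representation associated with the partition (n-s,s). *)
Definition is_L2rs (r s : nat) (V : L2 C n -> Prop) : Prop :=
  [/\ G_irreducible V, forall u, V u -> L2r r u & G_isomorphic V (specht s)].

Definition orth (V : L2 C n -> Prop) (psi : L2 C n) : Prop :=
  forall u, V u -> dotL2 psi u = 0.

End Defs.

Definition Nbound (n r1 r2 : nat) : nat :=
  minn (minn r1 (n - r1)) (minn r2 (n - r2)).

Definition ffact (R : pzRingType) (alpha : R) (k : nat) : R :=
  \prod_(i < k) (alpha - i%:R).

(* Lambda is a Lambda_s^{r1,r2} with normalized kernel polynomial p = lambda_s^{r1,r2} *)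
Definition is_Lambda (C : numClosedFieldType) (n r1 r2 s : nat)
    (V1 V2 : L2 C n -> Prop) (Lam : L2 C n -> L2 C n) (p : {poly C}) : Prop :=
  [/\ is_linear Lam, G_equivariant Lam,
      (forall psi, V1 psi -> V2 (Lam psi)) /\
      (forall psi, orth V1 psi -> Lam psi = fzero C n),
      (forall psi (x2 : {set 'I_n}), #|x2| = r2 ->
        Lam psi x2 = \sum_(x1 : {set 'I_n} | #|x1| == r1) p.[(#|x2 :\: x1|)%:R] * psi x1)
    & size p = s.+1 /\ p.[0] = 1].

(* The kernel polynomial is determined by testing Lambda against the indicators
   of the families {x : |x| = r, x :&: Z = Y} with |Z| = s - 1.  By pigeonhole
   such an indicator is fixed by a column transposition of every two-row
   tableau, which negates the polytabloid, so it is orthogonal to every copy of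
   the Specht module S^(n-s,s).  Orthogonality to V1 means that Lambda kills it;
   orthogonality to V2 means that the adjoint of Lambda maps it into the
   complement of V1.  With q(k) = lambda(r2 - k) this makes the sums of
   q(|x :&: X|) over the families vanish, for |X| = r2 and x of size r1, resp.
   |X| = r1 and x of size r2.  Expanding q in falling factorials, these sums are
   the values at r - |Y| of a polynomial of degree s taking the values q(|X|) at
   n - s + 1 and q(0) at 0; having s roots, it is proportional to their
   product, which relates q(|X|) to q(0) = lambda(r2).  Taking |X| = r2, where
   q(r2) = lambda(0) = 1, gives lambda(r2); taking |X| = r1 gives
   lambda(r2 - r1). *)

From mathcomp Require Import all_boot all_order all_algebra all_fingroup.
From mathcomp Require Import zify ring.
Set Implicit Arguments.
Unset Strict Implicit.
Unset Printing Implicit Defensive.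
Import GRing.Theory Num.Theory.
Local Open Scope ring_scope.

Section SetCounting.
Local Open Scope nat_scope.
Variable n : nat.
Implicit Types A B D X Y Z x : {set 'I_n}.

Lemma cardsC_ord A : #|~: A| = n - #|A|.
Proof. by have := cardsC A; rewrite card_ord; lia. Qed.

Lemma cardsU_disjoint A B : [disjoint A & B] -> #|A :|: B| = #|A| + #|B|.
Proof. by move=> dAB; rewrite cardsU disjoint_setI0 // cards0 subn0. Qed.

Lemma exists_subset_card B k : k <= #|B| -> exists2 A : {set 'I_n}, A \subset B & #|A| = k.
Proof.
move=> hk; have /card_gt0P[A] : 0 < #|[set A : {set 'I_n} | A \subset B & #|A| == k]|.
  by rewrite cards_draws bin_gt0.
by rewrite inE => /andP[sAB /eqP cA]; exists A.
Qed.

Lemma exists_disjoint_cards a b : a + b <= n ->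
  exists X Z : {set 'I_n}, [/\ #|X| = a, #|Z| = b & [disjoint X & Z]].
Proof.
move=> le_abn; have [X _ cX] : exists2 X : {set 'I_n}, X \subset setT & #|X| = a.
  by apply: exists_subset_card; rewrite cardsT card_ord (leq_trans _ le_abn) ?leq_addr.
have [Z sZ cZ] : exists2 Z : {set 'I_n}, Z \subset ~: X & #|Z| = b.
  by apply: exists_subset_card; rewrite cardsC_ord cX leq_subRL // (leq_trans _ le_abn) ?leq_addr.
by exists X, Z; split; rewrite // disjoint_sym disjoints_subset.
Qed.

Lemma card_sets_between A B r : [disjoint A & B] ->
  #|[set x : {set 'I_n} | (#|x| == r) && (A \subset x) && [disjoint x & B]]| =
  if #|A| <= r then 'C(n - #|A| - #|B|, r - #|A|) else 0.
Proof.
move=> dAB; case: leqP => hA; last first.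
  apply: eq_card0 => x; rewrite !inE; apply/negP => /andP[/andP[/eqP cx /subset_leq_card]].
  by rewrite cx leqNgt hA.
set U := ~: (A :|: B).
have cU : #|U| = n - #|A| - #|B| by rewrite cardsC_ord cardsU_disjoint // subnDA.
rewrite -cU -cards_draws.
have dUA (w : {set 'I_n}) : w \subset U -> [disjoint w & A].
  by move=> swU; rewrite disjoints_subset (subset_trans swU) // setCS subsetUl.
have injU : {in [set w : {set 'I_n} | w \subset U & #|w| == r - #|A|] &, injective (setU A)}.
  move=> w1 w2; rewrite !inE => /andP[/dUA d1 _] /andP[/dUA d2 _] /(congr1 (fun X => X :\: A)).
  by rewrite !setDUl setDv !set0U (setDidPl d1) (setDidPl d2).
rewrite -(card_in_imset injU); apply: eq_card => x; rewrite !inE; apply/idP/imsetP.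
- move=> /andP[/andP[/eqP cx sAx] dxB]; exists (x :\: A).
    rewrite !inE cardsD (setIidPr sAx) cx eqxx andbT.
    apply/subsetP => j; rewrite !inE negb_or => /andP[-> jx] /=.
    by rewrite (disjointFr dxB jx).
  by rewrite setDE setUIr setUCr setIT (setUidPr sAx).
- move=> [w]; rewrite !inE => /andP[swU /eqP cw] ->.
  have dAw : [disjoint A & w] by rewrite disjoint_sym dUA.
  rewrite cardsU_disjoint // cw subnKC // eqxx subsetUl /=.
  rewrite disjoints_subset subUset -disjoints_subset dAB /=.
  by rewrite (subset_trans swU) // setCS subsetUr.
Qed.

Lemma setI_eqE x Z Y : Y \subset Z ->
  (x :&: Z == Y) = (Y \subset x) && [disjoint x & Z :\: Y].
Proof.
move=> sYZ; apply/eqP/andP => [<-|[sYx dxZY]].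
  split; first exact: subsetIl.
  rewrite -setI_eq0; apply/eqP/setP => j; rewrite !inE.
  by case: (j \in x); case: (j \in Z).
apply/setP => j; rewrite inE; apply/andP/idP => [[jx jZ]|jY].
  by apply: contraLR jx => jY; rewrite (disjointFl dxZY) // !inE jY.
by rewrite (subsetP sYx j jY) (subsetP sYZ j jY).
Qed.

Lemma sum_bin_card_setI X Z Y r i : [disjoint X & Z] -> Y \subset Z ->
  \sum_(x : {set 'I_n} | (#|x| == r) && (x :&: Z == Y)) 'C(#|x :&: X|, i) =
  'C(#|X|, i) * (if #|Y| + i <= r then 'C(n - #|Z| - i, r - #|Y| - i) else 0).
Proof.
move=> dXZ sYZ.
under eq_bigr => x _ do rewrite -cards_draws -sum1_card.
rewrite (exchange_big_dep (fun D => (D \subset X) && (#|D| == i))) /=; last first.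
  by move=> x D _; rewrite inE subsetI => /andP[/andP[_ ->] ->].
rewrite -cards_draws -sum1_card big_distrl /=; apply: eq_big => D; first by rewrite inE.
move=> /andP[sDX /eqP cD]; rewrite mul1n sum1_card.
have dDZ : [disjoint D & Z] by apply: disjointWl sDX dXZ.
have dYD : [disjoint Y & D] by rewrite disjoint_sym; apply: disjointWr sYZ dDZ.
have dYD_ZY : [disjoint Y :|: D & Z :\: Y].
  rewrite disjoints_subset subUset setDE setCI setCK subsetUr /=.
  by rewrite (subset_trans _ (subsetUl _ _)) // -disjoints_subset.
transitivity #|[set x : {set 'I_n} | (#|x| == r) && (Y :|: D \subset x) && [disjoint x & Z :\: Y]]|.
  apply: eq_card => x; rewrite unfold_in /= !inE setI_eqE // subUset subsetI sDX cD eqxx !andbT.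
  by case: (_ == r); case: (Y \subset x); case: (D \subset x); case: [disjoint _ & _].
rewrite card_sets_between // cardsU_disjoint // cD cardsD (setIidPr sYZ).
have /subset_leq_card hY := sYZ; have hZ : #|Z| <= n by rewrite -[n in _ <= n]card_ord max_card.
by case: leqP => // _; congr binomial; move: hY hZ; move: #|Y| #|Z| => a b; lia.
Qed.

End SetCounting.

Lemma bin_subn_ffact T m i : (i <= m)%N -> (m <= T)%N ->
  ('C(T - i, m - i) * T ^_ i = 'C(T, m) * m ^_ i)%N.
Proof.
move=> him hmT; have pos : (0 < (m - i)`! * (T - m)`!)%N by rewrite muln_gt0 !fact_gt0.
have eT : (T - i - (m - i) = T - m)%N by lia.
have binTi := bin_fact (leq_sub2r i hmT); rewrite eT in binTi.
apply/eqP; rewrite -(eqn_pmul2r pos).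
rewrite mulnAC binTi mulnC ffact_fact ?(leq_trans him) //.
by rewrite -!mulnA (mulnA (m ^_ i)) ffact_fact // bin_fact.
Qed.

Section FallingFactorialPoly.
Variable R : comNzRingType.

Definition ffactp (k : nat) : {poly R} := \prod_(i < k) ('X - (i%:R)%:P).

Lemma horner_ffactp x k : (ffactp k).[x] = ffact x k.
Proof. by rewrite horner_prod; apply: eq_bigr => i _; rewrite hornerXsubC. Qed.

Lemma ffact_natr m k : ffact (m%:R : R) k = (m ^_ k)%:R.
Proof.
elim: k => [|k IHk]; first by rewrite /ffact big_ord0.
rewrite /ffact big_ord_recr /= -/(ffact _ k) IHk ffactnSr.
have [le_km | lt_mk] := leqP k m; first by rewrite natrM natrB.
by rewrite ffact_small // !mul0r.
Qed.

Lemma monic_ffactp k : ffactp k \is monic.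
Proof. exact: monic_prod_XsubC. Qed.

Lemma size_ffactp k : size (ffactp k) = k.+1.
Proof.
rewrite size_prod_XsubC -(card_uniqP (index_enum_uniq _)).
by rewrite (eq_card (@mem_index_enum _)) card_ord.
Qed.

Lemma ffactp_basis N (q : {poly R}) : (size q <= N)%N ->
  exists g : nat -> R, q = \sum_(i < N) g i *: ffactp i.
Proof.
elim: N q => [|N IHN] q le_qN.
  by exists (fun=> 0); rewrite big_ord0; apply/eqP; rewrite -size_poly_leq0.
have [g qE] : exists g : nat -> R, q - q`_N *: ffactp N = \sum_(i < N) g i *: ffactp i.
  apply: IHN; apply/leq_sizeP => j le_Nj; rewrite coefB coefZ.
  move: le_Nj; rewrite leq_eqVlt => /orP[/eqP <- | lt_Nj].
    have /monicP := monic_ffactp N; rewrite /lead_coef size_ffactp => ->.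
    by rewrite mulr1 subrr.
  have /leq_sizeP qN0 := le_qN; have /leq_sizeP fN0 := eq_leq (size_ffactp N).
  by rewrite (qN0 j) // (fN0 j) // mulr0 subr0.
exists (fun i => if i == N then q`_N else g i).
rewrite big_ord_recr /= eqxx -[LHS](subrK (q`_N *: ffactp N)) qE.
by congr (_ + _); apply: eq_bigr => i _; rewrite ltn_eqF.
Qed.

End FallingFactorialPoly.

Lemma horner_prod_roots_cross (F : fieldType) (P : {poly F}) (rs : seq F) x y :
  uniq rs -> all (root P) rs -> (size P <= (size rs).+1)%N ->
  P.[x] * \prod_(r <- rs) (y - r) = P.[y] * \prod_(r <- rs) (x - r).
Proof.
move=> urs /uniq_roots_prod_XsubC[|Q ->]; first by rewrite uniq_rootsE.
have [-> | nzQ] := eqVneq Q 0; first by rewrite mul0r !horner0 !mul0r.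
rewrite size_Mmonic ?monic_prod_XsubC // size_prod_XsubC addnS /= => le_Q.
have /size1_polyC -> : (size Q <= 1)%N by rewrite -(leq_add2r (size rs)) add1n.
have hornerP z : (\prod_(r <- rs) ('X - r%:P)).[z] = \prod_(r <- rs) (z - r).
  by rewrite horner_prod; apply: eq_bigr => r _; rewrite hornerXsubC.
by rewrite !hornerM !hornerC !hornerP mulrAC.
Qed.

Section FallingFactorialSums.
Variable R : numFieldType.
Implicit Type g : nat -> R.

Lemma horner_ffactp_nat (a i : nat) : (ffactp R i).[a%:R] = (a ^_ i)%:R.
Proof. by rewrite horner_ffactp ffact_natr. Qed.

Lemma natr_ffact_neq0 (T i : nat) : (i <= T)%N -> (T ^_ i)%:R != 0 :> R.
Proof. by rewrite pnatr_eq0 -lt0n ffact_gt0. Qed.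

Lemma ffact_natr_neq0 (m k : nat) : (k <= m)%N -> ffact (m%:R : R) k != 0.
Proof. by rewrite ffact_natr; apply: natr_ffact_neq0. Qed.

Definition ffact_hyper g (N a T : nat) : {poly R} :=
  \sum_(i < N) (g i * (a ^_ i)%:R / (T ^_ i)%:R) *: ffactp R i.

Lemma horner_ffact_hyper_T g N a T : (N <= T.+1)%N ->
  (ffact_hyper g N a T).[T%:R] = (\sum_(i < N) g i *: ffactp R i).[a%:R].
Proof.
move=> le_NT; rewrite !horner_sum; apply: eq_bigr => i _.
rewrite !hornerZ !horner_ffactp_nat divfK // natr_ffact_neq0 //.
by rewrite -ltnS (leq_trans _ le_NT).
Qed.

Lemma horner_ffact_hyper_0 g N a T :
  (ffact_hyper g N a T).[0] = (\sum_(i < N) g i *: ffactp R i).[0].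
Proof.
rewrite !horner_sum; apply: eq_bigr => -[[|i] lt_iN] _.
  by rewrite !hornerZ !ffactn0 divr1 mulr1.
by rewrite !hornerZ -(mulr0n 1) horner_ffactp_nat ffact0n !mulr0.
Qed.

Lemma sum_setI_horner n (X Z Y : {set 'I_n}) (r N : nat) g :
  [disjoint X & Z] -> Y \subset Z -> (#|Y| <= r)%N -> (r - #|Y| <= n - #|Z|)%N ->
  (N <= (n - #|Z|).+1)%N ->
  \sum_(x : {set 'I_n} | (#|x| == r) && (x :&: Z == Y))
      (\sum_(i < N) g i *: ffactp R i).[#|x :&: X|%:R]
  = 'C(n - #|Z|, r - #|Y|)%:R * (ffact_hyper g N #|X| (n - #|Z|)).[(r - #|Y|)%:R].
Proof.
move=> dXZ sYZ le_Yr le_mT le_NT.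
under eq_bigr => x _ do rewrite horner_sum.
rewrite exchange_big /= !horner_sum mulr_sumr; apply: eq_bigr => i _.
under eq_bigr => x _ do rewrite hornerZ horner_ffactp_nat -bin_ffact.
rewrite -mulr_sumr -natr_sum -big_distrl /= sum_bin_card_setI // hornerZ horner_ffactp_nat.
have le_iT : (i <= n - #|Z|)%N by rewrite -ltnS (leq_trans (ltn_ord i)).
have nzTi : ((n - #|Z|) ^_ i)%:R != 0 :> R := natr_ffact_neq0 le_iT.
case: (leqP (#|Y| + i) r) => [le_r | lt_r]; last first.
  by rewrite (@ffact_small (r - #|Y|) i) ?muln0 ?mulr0 //; lia.
rewrite mulnAC bin_ffact; apply: (mulIf nzTi).
have le_im : (i <= r - #|Y|)%N by rewrite leq_subRL.
rewrite -[LHS]mulrA -[in LHS]natrM -mulnA (bin_subn_ffact le_im le_mT).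
by rewrite !natrM; field.
Qed.

Lemma prod_neg_natrB (r k : nat) : (k <= r)%N ->
  \prod_(y < k) (0 - (r - y)%:R) = (-1) ^+ k * ffact (r%:R : R) k.
Proof.
move=> le_kr; rewrite /ffact -[in (-1) ^+ k](card_ord k) -prodr_const -big_split /=.
apply: eq_bigr => y _; rewrite natrB ?mulN1r ?sub0r // ltnW //.
exact: leq_trans (ltn_ord y) le_kr.
Qed.

Lemma prod_natrB_shift (n r k : nat) : (k <= r)%N -> (r + k.+1 <= n)%N ->
  \prod_(y < k.+1) ((n - k)%:R - (r - y)%:R) = ffact ((n - r)%:R : R) k.+1.
Proof.
move=> le_kr le_rkn; rewrite /ffact (reindex_inj rev_ord_inj) /=.
apply: eq_bigr => y _; have lt_yk := ltn_ord y.
by rewrite subSS !natrB; [ring | lia ..].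
Qed.

Lemma horner_relation_of_sums n (q : {poly R}) (X Z : {set 'I_n}) (s r : nat) :
  (size q <= s.+2)%N -> #|Z| = s -> [disjoint X & Z] ->
  (s.+1 <= r)%N -> (r + s.+1 <= n)%N ->
  (forall Y : {set 'I_n}, Y \subset Z ->
     \sum_(x : {set 'I_n} | (#|x| == r) && (x :&: Z == Y)) q.[#|x :&: X|%:R] = 0) ->
  q.[#|X|%:R] * ((-1) ^+ s.+1 * ffact (r%:R : R) s.+1) = ffact ((n - r)%:R : R) s.+1 * q.[0].
Proof.
move=> size_q cZ dXZ le_sr le_rn sums0.
have [g qE] := ffactp_basis size_q.
set H := ffact_hyper g s.+2 #|X| (n - s).
have le_NT : (s.+2 <= (n - s).+1)%N by lia.
have H_roots y : (y <= s)%N -> H.[(r - y)%:R] = 0.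
  move=> le_ys; have [Y sYZ cY] : exists2 Y : {set 'I_n}, Y \subset Z & #|Y| = y.
    by apply: exists_subset_card; rewrite cZ.
  have := sums0 Y sYZ; rewrite qE sum_setI_horner ?cZ ?cY //; try lia.
  move/eqP; rewrite mulf_eq0 pnatr_eq0 eqn0Ngt bin_gt0 => /orP[/negP[] | /eqP //].
  lia.
pose rs := [seq (r - y)%:R | y <- index_iota 0 s.+1] : seq R.
have := @horner_prod_roots_cross _ H rs (n - s)%:R 0.
rewrite horner_ffact_hyper_T // horner_ffact_hyper_0 -qE /rs !big_map !big_mkord.
rewrite prod_neg_natrB // prod_natrB_shift ?(ltnW le_sr) // [RHS]mulrC => -> //.
- rewrite map_inj_in_uniq ?iota_uniq // => y1 y2; rewrite !mem_index_iota /=.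
  by move=> lt_y1 lt_y2 /eqP; rewrite eqr_nat => /eqP; lia.
- apply/allP => z /mapP[y]; rewrite mem_index_iota => lt_y ->.
  by apply/eqP/H_roots; lia.
- rewrite size_map size_iota subn0; apply: (leq_trans (size_sum _ _ _)).
  apply/bigmax_leqP => i _; rewrite (leq_trans (size_scale_leq _ _)) // size_ffactp.
  exact: ltn_ord.
Qed.

End FallingFactorialSums.

Section Representation.
Variables (C : numClosedFieldType) (n : nat).
Local Notation fzero := (fzero C n).

Lemma big_fadd_ffunE I (r : seq I) (P : pred I) (F : I -> L2 C n) x :
  (\big[@fadd C n/fzero]_(i <- r | P i) F i) x = \sum_(i <- r | P i) F i x.
Proof. by apply: (big_morph (fun f : L2 C n => f x)) => [f g|]; rewrite ffunE. Qed.

Section Linear.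
Variable phi : L2 C n -> L2 C n.
Hypothesis lin_phi : is_linear phi.

Lemma linear_fzero : phi fzero = fzero.
Proof.
have := lin_phi 1 fzero fzero.
have -> : fadd (fscale 1 fzero) fzero = fzero by apply/ffunP => x; rewrite !ffunE mul1r addr0.
move/ffunP => phi0; apply/ffunP => x; have := phi0 x; rewrite !ffunE mul1r.
by move=> E; apply/esym/(addrI (phi fzero x)); rewrite addr0 -E.
Qed.

Lemma linear_fadd u v : phi (fadd u v) = fadd (phi u) (phi v).
Proof.
have scale1 w : fscale 1 w = w by apply/ffunP => x; rewrite !ffunE mul1r.
by rewrite -[u in LHS]scale1 lin_phi scale1.
Qed.

Lemma linear_fscale a u : phi (fscale a u) = fscale a (phi u).
Proof.
have add0 w : fadd w fzero = w by apply/ffunP => x; rewrite !ffunE addr0.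
by rewrite -[fscale a u]add0 lin_phi linear_fzero add0.
Qed.

Lemma linear_inj_on (V : L2 C n -> Prop) : is_subspace V ->
  (forall u, V u -> phi u = fzero -> u = fzero) ->
  forall u1 u2, V u1 -> V u2 -> phi u1 = phi u2 -> u1 = u2.
Proof.
move=> [_ VD VZ] ker0 u1 u2 Vu1 Vu2 e12.
have /ker0 : V (fadd (fscale (-1) u1) u2) by apply: VD => //; apply: VZ.
have negK w : fadd (fscale (-1) w) w = fzero.
  by apply/ffunP => x; rewrite !ffunE mulN1r addNr.
rewrite linear_fadd linear_fscale e12 => /(_ (negK _)) /ffunP d0; apply/ffunP => x.
by have := d0 x; rewrite !ffunE mulN1r => /eqP; rewrite addrC subr_eq0 => /eqP.
Qed.

End Linear.

Section Tableau.
Variables (s : nat) (a b : 'I_s -> 'I_n).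

Definition col_tabloid (e : {ffun 'I_s -> bool}) : {set 'I_n} :=
  [set (if e j then a j else b j) | j : 'I_s].

Definition flip_col (i : 'I_s) (e : {ffun 'I_s -> bool}) : {ffun 'I_s -> bool} :=
  [ffun j => (j == i) (+) e j].

Lemma flip_colK i : involutive (flip_col i).
Proof. by move=> e; apply/ffunP => j; rewrite !ffunE addbA addbb. Qed.

Lemma sign_flip_col i e :
  (-1) ^+ #|[set j | flip_col i e j]| = - (-1) ^+ #|[set j | e j]| :> C.
Proof.
have eqD : [set j | flip_col i e j] :\ i = [set j | e j] :\ i.
  by apply/setP => j; rewrite !inE ffunE; case: eqP.
rewrite (cardsD1 i [set j | flip_col i e j]) (cardsD1 i [set j | e j]) eqD !inE ffunE eqxx.
by case: (e i); rewrite /= ?add0n ?add1n exprS mulN1r ?opprK.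
Qed.

Lemma tperm_col_tabloid i e : two_row_tableau a b ->
  tperm (a i) (b i) @: col_tabloid e = col_tabloid (flip_col i e).
Proof.
case=> inj_a inj_b neq_ab; rewrite -imset_comp; apply: eq_imset => j /=.
rewrite ffunE; have [-> | neq_ji] := eqVneq j i.
  by case: (e i); rewrite /= ?tpermL ?tpermR.
have neq_a : a i != a j by apply: contra_neq neq_ji => /inj_a ->.
have neq_b : b i != b j by apply: contra_neq neq_ji => /inj_b ->.
by case: (e j); rewrite tpermD //; apply/eqP => /esym; [move/neq_ab | move/esym/neq_ab].
Qed.

Lemma polytabloidE x : polytabloid C a b x =
  \sum_(e : {ffun 'I_s -> bool}) (-1) ^+ #|[set j | e j]| * (x == col_tabloid e)%:R.
Proof.
rewrite big_fadd_ffunE; apply: eq_bigr => e _; rewrite !ffunE.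
by case: (x == _).
Qed.

Lemma rho_tperm_polytabloid i : two_row_tableau a b ->
  rho (tperm (a i) (b i)) (polytabloid C a b) = fscale (-1) (polytabloid C a b).
Proof.
move=> tab; apply/ffunP => x; rewrite !ffunE tpermV !polytabloidE mulr_sumr.
set t := tperm (a i) (b i).
have tK (X : {set 'I_n}) : t @: (t @: X) = X.
  by rewrite -imset_comp (eq_imset _ (tpermK _ _)) imset_id.
have tE e : (t @: x == col_tabloid e) = (x == col_tabloid (flip_col i e)).
  by rewrite -(inj_eq (imset_inj (@perm_inj _ t))) tK tperm_col_tabloid.
rewrite (reindex_inj (can_inj (flip_colK i))) /=; apply: eq_bigr => e _.
by rewrite tE flip_colK sign_flip_col mulNr mulN1r.
Qed.

End Tableau.

Definition col_invariant (s : nat) (h : {set 'I_n} -> C) : Prop :=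
  forall a b : 'I_s -> 'I_n, two_row_tableau a b ->
    exists i, forall x : {set 'I_n}, h (tperm (a i) (b i) @: x) = h x.

(* Pairing with h is a linear form on V; transported to the Specht module it
   vanishes on polytabloids, which a column transposition fixing h negates. *)
Lemma sum_col_invariant_eq0 (V : L2 C n -> Prop) s h :
  is_subspace V -> G_invariant V -> G_isomorphic V (@specht C n s) ->
  col_invariant s h -> forall u, V u -> \sum_(x : {set 'I_n}) u x * h x = 0.
Proof.
move=> Vsub VG [phi [lin_phi eqv_phi VW ker0 onto]] hinv.
have [V0 VD VZ] := Vsub; have injV := linear_inj_on lin_phi Vsub ker0.
pose P w := @specht C n s w /\
  forall u, V u -> phi u = w -> \sum_(x : {set 'I_n}) u x * h x = 0.
suff PS w : @specht C n s w -> P w by move=> u Vu; apply: (PS _ (VW u Vu)).2.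
apply; last first.
  move=> _ [a [b [tab ->]]]; split; first by move=> W _; apply; exists a, b.
  move=> u Vu phi_u; have [i hi] := hinv a b tab; set t := tperm (a i) (b i).
  have rho_u : rho t u = fscale (-1) u.
    apply: injV => //; [exact: VG | exact: VZ |].
    by rewrite eqv_phi phi_u linear_fscale // phi_u rho_tperm_polytabloid.
  have u_t (x : {set 'I_n}) : u (t @: x) = - u x.
    by have /ffunP/(_ x) := rho_u; rewrite !ffunE tpermV mulN1r.
  apply/eqP; rewrite -[_ == 0](mulrn_eq0 _ 2) mulr2n.
  rewrite {1}(reindex_inj (imset_inj (@perm_inj _ t))).
  by rewrite -big_split /=; apply/eqP/big1 => x _; rewrite u_t hi mulNr addNr.
split.
- split; first by move=> W [W0 _ _] _.
  move=> u Vu phi_u; rewrite (injV _ _ Vu V0 (etrans phi_u (esym (linear_fzero lin_phi)))).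
  by apply: big1 => x _; rewrite ffunE mul0r.
- move=> w1 w2 [S1 P1] [S2 P2]; split.
    by move=> W Wsub Wgen; case: (Wsub) => _ WD _; apply: WD; [apply: S1 | apply: S2].
  move=> u Vu phi_u; have [u1 Vu1 e1] := onto _ S1; have [u2 Vu2 e2] := onto _ S2.
  have -> : u = fadd u1 u2 by apply: injV => //; [exact: VD | rewrite linear_fadd // e1 e2].
  under eq_bigr => x _ do rewrite ffunE mulrDl.
  by rewrite big_split /= (P1 u1 Vu1 e1) (P2 u2 Vu2 e2) addr0.
- move=> c w1 [S1 P1]; split.
    by move=> W Wsub Wgen; case: (Wsub) => _ _ WZ; apply: WZ; apply: S1.
  move=> u Vu phi_u; have [u1 Vu1 e1] := onto _ S1.
  have -> : u = fscale c u1 by apply: injV => //; [exact: VZ | rewrite linear_fscale // e1].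
  under eq_bigr => x _ do rewrite ffunE -mulrA.
  by rewrite -mulr_sumr (P1 u1 Vu1 e1) mulr0.
Qed.

Lemma tableau_col_notin s (a b : 'I_s -> 'I_n) (Z : {set 'I_n}) :
  two_row_tableau a b -> (#|Z| < s)%N -> exists i, (a i \notin Z) && (b i \notin Z).
Proof.
case=> inj_a inj_b neq_ab lt_Zs; apply/existsP; apply: contraLR lt_Zs => /existsPn allZ.
pose f i := if a i \in Z then a i else b i.
have f_inj : injective f.
  move=> i j; rewrite /f; case: (a i \in Z); case: (a j \in Z);
    by [move/inj_a | move/neq_ab | move/esym/neq_ab | move/inj_b].
rewrite -leqNgt -[s in (s <= _)%N]card_ord -(card_imset _ f_inj).
apply/subset_leq_card/subsetP => _ /imsetP[i _ ->]; rewrite /f.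
by case: ifP => // aZ; have := allZ i; rewrite aZ /= negbK.
Qed.

Lemma col_invariant_setI (s r : nat) (Z Y : {set 'I_n}) : (#|Z| < s)%N ->
  col_invariant s (fun x => ((#|x| == r) && (x :&: Z == Y))%:R).
Proof.
move=> lt_Zs a b tab; have [i /andP[aZ bZ]] := tableau_col_notin tab lt_Zs.
exists i => x; set t := tperm (a i) (b i).
have tZ : t @: x :&: Z = x :&: Z.
  apply/setP => j; rewrite !inE; case jZ: (j \in Z); rewrite ?andbF //.
  have tj : t j = j.
    by rewrite tpermD //; apply/eqP => eij; [move: aZ | move: bZ]; rewrite eij jZ.
  by rewrite -{1}tj mem_imset //; apply: perm_inj.
by rewrite card_imset ?tZ //; apply: perm_inj.
Qed.

End Representation.

Section Kernel.
Variables (C : numClosedFieldType) (n r1 r2 s : nat).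
Variables (V1 V2 : L2 C n -> Prop) (Lam : L2 C n -> L2 C n) (p : {poly C}).
Hypotheses (le_s_r1 : (s.+1 <= r1)%N) (le_r1_n : (r1 + s.+1 <= n)%N).
Hypotheses (le_s_r2 : (s.+1 <= r2)%N) (le_r2_n : (r2 + s.+1 <= n)%N).
Hypotheses (HV1 : is_L2rs r1 s.+1 V1) (HV2 : is_L2rs r2 s.+1 V2).
Hypothesis HLam : is_Lambda r1 r2 s.+1 V1 V2 Lam p.
Implicit Types (x X : {set 'I_n}) (psi : L2 C n).

Let q := p \Po (r2%:R%:P - 'X).

Lemma horner_q k : q.[k] = p.[r2%:R - k].
Proof. by rewrite horner_comp !hornerE. Qed.

Lemma size_q : (size q <= s.+2)%N.
Proof.
have [_ _ _ _ [size_p _]] := HLam.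
apply: leq_trans (size_comp_poly_leq _ _) _.
by rewrite size_p -opprB size_polyN size_XsubC /= muln1.
Qed.

Lemma horner_p_setD (x X : {set 'I_n}) : #|x| = r2 ->
  p.[#|x :\: X|%:R] = q.[#|x :&: X|%:R].
Proof. by move=> cx; rewrite horner_q cardsD natrB ?cx // -cx subset_leq_card ?subsetIl. Qed.

Lemma orth_conj_ffun (V : L2 C n -> Prop) (c : {set 'I_n} -> C) :
  (forall u, V u -> \sum_(x : {set 'I_n}) u x * c x = 0) -> orth V [ffun x => (c x)^*].
Proof.
move=> c_orth u Vu; rewrite /dotL2.
transitivity ((\sum_x u x * c x)^*); last by rewrite c_orth ?conjC0.
by rewrite rmorph_sum; apply: eq_bigr => x _; rewrite ffunE rmorphM mulrC.
Qed.

Lemma sum_mul_Lambda (h : {set 'I_n} -> C) psi : (forall x, #|x| != r2 -> h x = 0) ->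
  \sum_(x1 : {set 'I_n} | #|x1| == r1)
     (\sum_(x2 : {set 'I_n}) h x2 * p.[#|x2 :\: x1|%:R]) * psi x1 =
  \sum_(x2 : {set 'I_n}) h x2 * Lam psi x2.
Proof.
have [_ _ _ Lam_kernel _] := HLam; move=> h_supp.
under eq_bigr => x1 _ do rewrite mulr_suml.
rewrite exchange_big /=; apply: eq_bigr => x2 _.
have [cx2 | /h_supp ->] := eqVneq #|x2| r2; last first.
  by rewrite mul0r big1 // => x1 _; rewrite !mul0r.
by rewrite Lam_kernel // mulr_sumr; apply: eq_bigr => x1 _; rewrite mulrA.
Qed.

Section Indicator.
Variables (Z Y : {set 'I_n}).
Hypothesis cZ : #|Z| = s.

Let ind (r : nat) (x : {set 'I_n}) : C := ((#|x| == r) && (x :&: Z == Y))%:R.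

Lemma Lambda_sum_setI_r1 (X : {set 'I_n}) : #|X| = r2 -> [disjoint X & Z] ->
  \sum_(x : {set 'I_n} | (#|x| == r1) && (x :&: Z == Y)) q.[#|x :&: X|%:R] = 0.
Proof.
move=> cX dXZ; have [[[V1sub V1inv] _ _] _ V1iso] := HV1.
have [_ _ [_ Lam_orth] Lam_kernel _] := HLam.
have ind_inv : col_invariant s.+1 (ind r1) by apply: col_invariant_setI; rewrite cZ.
have /orth_conj_ffun/Lam_orth/ffunP/(_ X) := sum_col_invariant_eq0 V1sub V1inv V1iso ind_inv.
rewrite Lam_kernel // ffunE => sum0; rewrite -[RHS]sum0 big_mkcondr /=.
apply: eq_bigr => x cx.
rewrite ffunE /ind conjC_nat cx horner_p_setD // (setIC X x).
by case: (_ == Y); rewrite ?mulr1 ?mulr0.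
Qed.

(* The indicator is orthogonal to V2, which contains Lambda V1, so its image c
   under the adjoint of Lambda is orthogonal to V1 and killed by Lambda; hence
   <c, c> = <ind, Lambda c> = 0. *)
Lemma adjoint_Lambda_ind_eq0 (X : {set 'I_n}) : #|X| = r1 ->
  \sum_(x2 : {set 'I_n}) ind r2 x2 * p.[#|x2 :\: X|%:R] = 0.
Proof.
move=> cX; have [[[V1sub _] _ _] _ _] := HV1; have [[[V2sub V2inv] _ _] _ V2iso] := HV2.
have [_ _ [Lam_V12 Lam_orth] _ _] := HLam.
set c := fun x1 => \sum_(x2 : {set 'I_n}) ind r2 x2 * p.[#|x2 :\: x1|%:R].
have ind_supp x : #|x| != r2 -> ind r2 x = 0 by rewrite /ind => /negbTE ->.
have ind_inv : col_invariant s.+1 (ind r2) by apply: col_invariant_setI; rewrite cZ.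
pose c1 x := (#|x| == r1)%:R * c x.
have c1_orth : orth V1 [ffun x => (c1 x)^*].
  apply: orth_conj_ffun => u V1u.
  transitivity (\sum_(x : {set 'I_n} | #|x| == r1) c x * u x).
    rewrite [RHS]big_mkcond /=; apply: eq_bigr => x _.
    by rewrite /c1; case: (_ == r1); rewrite ?mul1r ?mul0r ?mulr0 // mulrC.
  have Lam_u_orth := sum_col_invariant_eq0 V2sub V2inv V2iso ind_inv (Lam_V12 u V1u).
  rewrite sum_mul_Lambda // -[RHS]Lam_u_orth.
  by apply: eq_bigr => x _; rewrite mulrC.
have sum_fzero : \sum_x ind r2 x * fzero C n x = 0 by apply: big1 => x _; rewrite ffunE mulr0.
have := sum_mul_Lambda [ffun x => (c1 x)^*] ind_supp; rewrite Lam_orth // sum_fzero.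
under eq_bigr => x cx do rewrite ffunE /c1 cx mul1r.
move/psumr_eq0P => cc0; apply/eqP; rewrite -mul_conjC_eq0 cc0 ?cX //.
by move=> x _; rewrite mul_conjC_ge0.
Qed.

Lemma Lambda_sum_setI_r2 X : #|X| = r1 ->
  \sum_(x : {set 'I_n} | (#|x| == r2) && (x :&: Z == Y)) q.[#|x :&: X|%:R] = 0.
Proof.
move=> cX; rewrite -[RHS](adjoint_Lambda_ind_eq0 cX) big_mkcond /=; apply: eq_bigr => x _.
rewrite /ind; have [cx | _] := eqVneq #|x| r2; last by rewrite mul0r.
by rewrite horner_p_setD //; case: (_ == Y); rewrite ?mul1r ?mul0r.
Qed.

End Indicator.

Lemma horner_Lambda_r2 : p.[r2%:R] * ffact (n - r1)%:R s.+1 = (-1) ^+ s.+1 * ffact r1%:R s.+1.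
Proof.
have [_ _ _ _ [_ p0]] := HLam.
have [|X [Z [cX cZ dXZ]]] := @exists_disjoint_cards n r2 s; first lia.
have := horner_relation_of_sums size_q cZ dXZ le_s_r1 le_r1_n
  (fun Y _ => Lambda_sum_setI_r1 Y cZ cX dXZ).
by rewrite cX !horner_q subrr subr0 p0 mul1r => ->; rewrite mulrC.
Qed.

Lemma horner_Lambda_r2_sub_r1 :
  p.[r2%:R - r1%:R] * ((-1) ^+ s.+1 * ffact r2%:R s.+1) = ffact (n - r2)%:R s.+1 * p.[r2%:R].
Proof.
have [|X [Z [cX cZ dXZ]]] := @exists_disjoint_cards n r1 s; first lia.
have := horner_relation_of_sums size_q cZ dXZ le_s_r2 le_r2_n
  (fun Y _ => Lambda_sum_setI_r2 Y cZ cX).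
by rewrite cX !horner_q subr0.
Qed.

End Kernel.

Theorem mainTheorem5 (C : numClosedFieldType) (n r1 r2 s : nat)
  (V1 V2 : L2 C n -> Prop) (Lam : L2 C n -> L2 C n) (p : {poly C}) :
  (r1 <= n)%N -> (r2 <= n)%N -> (s <= Nbound n r1 r2)%N ->
  is_L2rs r1 s V1 -> is_L2rs r2 s V2 ->
  is_Lambda r1 r2 s V1 V2 Lam p ->
  p.[r2%:R] = (-1) ^+ s * ffact (r1%:R : C) s / ffact ((n - r1)%:R : C) s /\
  p.[r2%:R - r1%:R] =
    ffact (r1%:R : C) s * ffact ((n - r2)%:R : C) s /
      (ffact ((n - r1)%:R : C) s * ffact (r2%:R : C) s).
Proof.
move=> _ _ le_sN HV1 HV2 HLam; have [_ _ _ _ [size_p p0]] := HLam.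
case: s le_sN HV1 HV2 HLam size_p => [|s] le_sN HV1 HV2 HLam size_p.
  have pC : p = 1 by rewrite [p]size1_polyC ?size_p // -horner_coef0 p0.
  by rewrite pC !hornerC /ffact !big_ord0 expr0 !mulr1 divr1.
move: le_sN; rewrite /Nbound !leq_min => /andP[/andP[le_s_r1 ?] /andP[le_s_r2 ?]].
have le_r1_n : (r1 + s.+1 <= n)%N by lia.
have le_r2_n : (r2 + s.+1 <= n)%N by lia.
have at_r2 := horner_Lambda_r2 le_s_r1 le_r1_n le_s_r2 le_r2_n HV1 HLam.
have at_r2_r1 := horner_Lambda_r2_sub_r1 le_s_r1 le_r1_n le_s_r2 le_r2_n HV1 HV2 HLam.
have nz_sign : (-1) ^+ s.+1 != 0 :> C by rewrite signr_eq0.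
have nz_nr1 : ffact ((n - r1)%:R : C) s.+1 != 0 by apply: ffact_natr_neq0; lia.
have nz_r2 : ffact (r2%:R : C) s.+1 != 0 by apply: ffact_natr_neq0.
have p_r2 : p.[r2%:R] = (-1) ^+ s.+1 * ffact r1%:R s.+1 / ffact (n - r1)%:R s.+1.
  by rewrite -at_r2 mulfK.
split=> //; apply: (mulIf (mulf_neq0 nz_sign nz_r2)); rewrite at_r2_r1 p_r2.
by field; rewrite nz_r2 nz_nr1.
Qed.
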